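(* Assume the collections $\mathscr C_{S,i,j}$ satisfy hypotheses (1)–(3) below, and let $\mathscr T\in\mathcal S_{\mathscr C}$. Let $i,j,l\in[5]$ be distinct, $f_1\in\Delta_{(ij)}$ and $f_2\in\Delta_{(il)}$. Then $\mathscr T$ does not have a flip supported on the circuit $X_{ij}^{f_1f_2}=((X_{ij}^{f_1f_2})^+,(X_{ij}^{f_1f_2})^-)$, where $(X_{ij}^{f_1f_2})^+=\{(e_i,f_1),(e_j,f_2)\}$ and $(X_{ij}^{f_1f_2})^-=\{(e_j,f_1),(e_i,f_2)\}$. Hypotheses: for each $S\in\binom{[5]}{4}$ and distinct $i,j\in S$, $\mathscr C_{S,i,j}$ is a collection of zonotopal triangulations $\mathscr T_{i_1i_2i_3}^{f_1f_2f_3}$ with $i_1,i_2,i_3\in S$, such that for each member, with $\{i_4\}=S\setminus\{i_1,i_2,i_3\}$: (1) there exist $f_1'\in\Delta_{(i_1i_4)}$, $f_2'\in\Delta_{(i_2i_4)}$, $f_3'\in\Delta_{(i_3i_4)}$ with $\mathscr T_{i_1i_2i_4}^{f_1f_2'f_1'},\mathscr T_{i_2i_3i_4}^{f_2f_3'f_2'},\mathscr T_{i_3i_1i_4}^{f_3f_1'f_3'}\in\mathscr C_{S,i,j}$; (2) if $i_1=i,i_2=j$, there exist such $f_1',f_2',f_3'$ with $\mathscr T_{i_1i_2i_4}^{f_1f_2'f_1'},\mathscr T_{i_3i_2i_4}^{f_2f_2'f_3'},\mathscr T_{i_1i_3i_4}^{f_3f_3'f_1'}\in\mathscr C_{S,i,j}$;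 and (3) for all distinct $i,j,l\in[5]$ and $f_1\in\Delta_{(ij)}$ there exist $k\in[5]\setminus\{i,j,l\}$, $f_2\in\Delta_{(jk)}$, $f_3\in\Delta_{(ki)}$ with $\mathscr T_{ijk}^{f_1f_2f_3}\in\mathscr C_{[5]\setminus\{l\},i,j}$. $\mathcal S_{\mathscr C}$ is the set of triangulations $\mathscr T$ of $A$ such that (i) every member of every $\mathscr C_{S,i,j}$ is a subset of $\mathscr T$, and (ii) for all $S$, distinct $i,j\in S$, $\mathscr T_{ijk}^{f_1f_2f_3}\in\mathscr C_{S,i,j}$ with $k\in S\setminus\{i,j\}$, $\{l\}=[5]\setminus S$ and $f\in\Delta_{(il)}$, we have $(X_{ijk}^{f_1f_2f_3}\setminus\{(e_i,f_1)\})\cup\{(e_i,f)\}\in\mathscr T$.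
   Context: General conventions. For a finite point set $A\subset\mathbb R^d$: a cell is a subset of $A$; a simplex is an affinely independent cell; a face of a cell $C$ is a subset $F\subseteq C$ which is the set of minimizers on $C$ of some linear functional. A triangulation of $A$ is a collection $\mathscr T$ of simplices of $A$, closed under taking faces, such that for all $\sigma,\sigma'\in\mathscr T$, $\mathrm{conv}(\sigma)\cap\mathrm{conv}(\sigma')=\mathrm{conv}(F)$ for a common face $F$ of $\sigma$ and $\sigma'$, and such that $\bigcup_{\sigma\in\mathscr T}\mathrm{conv}(\sigma)=\mathrm{conv}(A)$. A circuit is a minimal affinely dependent subset $X$; it satisfies an affine dependence $\sum_{x\in X}\lambda_x x=0$, $\sum\lambda_x=0$, all $\lambda_x\neq0$, unique up to scaling, which partitions $X=X^+\cup X^-$ into the points with positive and with negative coefficients; writing $X=(X^+,X^-)$ fixes a choice of sign. Set $\mathscr T_X^+:=\{\sigma\subseteq X:X^+\not\subseteq\sigma\}$ and $\mathscr T_X^-:=\{\sigma\subseteq X:X^-\not\subseteq\sigma\}$. For $C\in\mathscr T$, $\mathrm{link}_{\mathscr T}(C):=\{C'\in\mathscr T: C\cap C'=\emptyset,\ C\cup C'\in\mathscr T\}$. A triangulation $\mathscr T$ of $A$ has a flip supported on the circuit $(X^+,X^-)$, $X\subseteq A$, if $\mathscr T_X^+\subseteq\mathscr T$ and all inclusion-maximal elements of $\mathscr T_X^+$ have the same link $\mathscr L$ in $\mathscr T$. Setting. $\Gamma_5^2$ is the set of unordered pairs $(ij)=(ji)$ of distinct elements of $[5]$. For each $\alpha\in\Gamma_5^2$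 let $\Delta_\alpha$ be a finite set, the sets being pairwise disjoint, and let $\Delta^{n-1}:=\bigcup_\alpha\Delta_\alpha$ be the standard basis of $\mathbb R^n$. Let $e_1,\dots,e_5$ be the standard basis of $\mathbb R^5$ and $A:=\Delta^4\times\Delta^{n-1}=\{(e_i,f):i\in[5],f\in\Delta^{n-1}\}$. For distinct $i_1,\dots,i_t\in[5]$ and distinct $f_1,\dots,f_t\in\Delta^{n-1}$, $X_{i_1\cdots i_t}^{f_1\cdots f_t}$ is the circuit of $A$ with affine dependence $(e_{i_1},f_1)-(e_{i_2},f_1)+(e_{i_2},f_2)-(e_{i_3},f_2)+\dots+(e_{i_t},f_t)-(e_{i_1},f_t)=0$, with $+$ and $-$ parts read off from these signs, and $\mathscr T_{i_1\cdots i_t}^{f_1\cdots f_t}:=\mathscr T^+_{X_{i_1\cdots i_t}^{f_1\cdots f_t}}$. It is called zonotopal if $f_1\in\Delta_{(i_1i_2)},\dots,f_t\in\Delta_{(i_ti_1)}$. *)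

From HB Require Import structures.
From mathcomp Require Import all_boot all_order all_algebra.
Set Implicit Arguments. Unset Strict Implicit. Unset Printing Implicit Defensive.
Import Order.TTheory GRing.Theory Num.Theory.
Local Open Scope ring_scope.

Section PointConfig.
Variables (R : realFieldType) (T : finType) (d : nat) (pt : T -> 'rV[R]_d).

Definition in_conv (S : {set T}) (x : 'rV[R]_d) : Prop :=
  exists lam : T -> R,
    [/\ forall t, 0 <= lam t,
        forall t, t \notin S -> lam t = 0,
        \sum_t lam t = 1 &
        x = \sum_t lam t *: pt t].

Definition aff_indep (S : {set T}) : Prop :=
  forall lam : T -> R,
    (forall t, t \notin S -> lam t = 0) ->
    \sum_t lam t = 0 ->
    \sum_t lam t *: pt t = 0 ->
    forall t, lam t = 0.

Definition lin_val (c : 'cV[R]_d) (t : T) : R := (pt t *m c) 0 0.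

Definition is_face (F C : {set T}) : Prop :=
  F = set0 \/
  exists c : 'cV[R]_d,
    F = [set x in C | [forall y in C, lin_val c x <= lin_val c y]].

Definition is_triangulation (Tr : {set {set T}}) : Prop :=
  [/\ forall s, s \in Tr -> aff_indep s,
      forall s F, s \in Tr -> is_face F s -> F \in Tr,
      forall s s', s \in Tr -> s' \in Tr ->
        exists F, [/\ is_face F s, is_face F s' &
                      forall x, (in_conv s x /\ in_conv s' x) <-> in_conv F x] &
      forall x, (exists2 s, s \in Tr & in_conv s x) <-> in_conv [set: T] x].

Definition link (Tr : {set {set T}}) (C : {set T}) : {set {set T}} :=
  [set C' in Tr | [disjoint C & C'] && (C :|: C' \in Tr)].

Definition Tplus (Xp Xm : {set T}) : {set {set T}} :=
  [set s : {set T} | (s \subset Xp :|: Xm) && ~~ (Xp \subset s)].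

Definition is_maximal_in (Fam : {set {set T}}) (s : {set T}) : Prop :=
  s \in Fam /\ forall s', s' \in Fam -> s \subset s' -> s' = s.

Definition has_flip (Tr : {set {set T}}) (Xp Xm : {set T}) : Prop :=
  Tplus Xp Xm \subset Tr /\
  forall s1 s2, is_maximal_in (Tplus Xp Xm) s1 -> is_maximal_in (Tplus Xp Xm) s2 ->
    link Tr s1 = link Tr s2.

End PointConfig.

(* ---------- The configuration A = Delta^4 x Delta^{n-1} ----------
   Delta^{n-1} is the finType F (its elements are the standard basis
   vectors of R^n, n = #|F|); lab f is the unordered pair alpha with
   f \in Delta_alpha, represented as a 2-element subset of 'I_5. *)

Definition pointA (R : realFieldType) (F : finType) (p : 'I_5 * F)
  : 'rV[R]_(5 + #|F|) :=
  row_mx (\row_(k < 5) (k == p.1)%:R) (\row_(k < #|F|) (k == enum_rank p.2)%:R).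

Section Setting.
Variables (F : finType) (lab : F -> {set 'I_5}).

Definition inDelta (f : F) (i j : 'I_5) : bool := lab f == [set i; j].

Definition Xplus3 (i1 i2 i3 : 'I_5) (f1 f2 f3 : F) : {set 'I_5 * F} :=
  [set (i1, f1); (i2, f2); (i3, f3)].
Definition Xminus3 (i1 i2 i3 : 'I_5) (f1 f2 f3 : F) : {set 'I_5 * F} :=
  [set (i2, f1); (i3, f2); (i1, f3)].
Definition X3 i1 i2 i3 f1 f2 f3 : {set 'I_5 * F} :=
  Xplus3 i1 i2 i3 f1 f2 f3 :|: Xminus3 i1 i2 i3 f1 f2 f3.
Definition Tcirc3 i1 i2 i3 f1 f2 f3 : {set {set 'I_5 * F}} :=
  Tplus (Xplus3 i1 i2 i3 f1 f2 f3) (Xminus3 i1 i2 i3 f1 f2 f3).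

Definition zonotopal (i1 i2 i3 : 'I_5) (f1 f2 f3 : F) : bool :=
  [&& inDelta f1 i1 i2, inDelta f2 i2 i3 & inDelta f3 i3 i1].

Definition validSij (S : {set 'I_5}) (i j : 'I_5) : bool :=
  [&& #|S| == 4, i \in S, j \in S & i != j].

Variable C : {set 'I_5} -> 'I_5 -> 'I_5 -> {set {set {set 'I_5 * F}}}.

Definition C_members : Prop :=
  forall S i j, validSij S i j -> forall tau, tau \in C S i j ->
    exists i1 i2 i3 f1 f2 f3,
      [/\ [&& i1 \in S, i2 \in S & i3 \in S], uniq [:: i1; i2; i3],
          zonotopal i1 i2 i3 f1 f2 f3 & tau = Tcirc3 i1 i2 i3 f1 f2 f3].

Definition C_hyp1 : Prop :=
  forall S i j, validSij S i j ->
  forall i1 i2 i3 i4 f1 f2 f3,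
    [&& i1 \in S, i2 \in S & i3 \in S] -> uniq [:: i1; i2; i3] ->
    zonotopal i1 i2 i3 f1 f2 f3 -> Tcirc3 i1 i2 i3 f1 f2 f3 \in C S i j ->
    i4 \in S -> i4 \notin [:: i1; i2; i3] ->
    exists f1' f2' f3',
      [/\ [&& inDelta f1' i1 i4, inDelta f2' i2 i4 & inDelta f3' i3 i4],
          Tcirc3 i1 i2 i4 f1 f2' f1' \in C S i j,
          Tcirc3 i2 i3 i4 f2 f3' f2' \in C S i j &
          Tcirc3 i3 i1 i4 f3 f1' f3' \in C S i j].

Definition C_hyp2 : Prop :=
  forall S i j, validSij S i j ->
  forall i1 i2 i3 i4 f1 f2 f3,
    [&& i1 \in S, i2 \in S & i3 \in S] -> uniq [:: i1; i2; i3] ->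
    zonotopal i1 i2 i3 f1 f2 f3 -> Tcirc3 i1 i2 i3 f1 f2 f3 \in C S i j ->
    i4 \in S -> i4 \notin [:: i1; i2; i3] ->
    i1 = i -> i2 = j ->
    exists f1' f2' f3',
      [/\ [&& inDelta f1' i1 i4, inDelta f2' i2 i4 & inDelta f3' i3 i4],
          Tcirc3 i1 i2 i4 f1 f2' f1' \in C S i j,
          Tcirc3 i3 i2 i4 f2 f2' f3' \in C S i j &
          Tcirc3 i1 i3 i4 f3 f3' f1' \in C S i j].

Definition C_hyp3 : Prop :=
  forall i j l : 'I_5, uniq [:: i; j; l] ->
  forall f1, inDelta f1 i j ->
    exists k f2 f3,
      [/\ k \notin [:: i; j; l], inDelta f2 j k, inDelta f3 k i &
          Tcirc3 i j k f1 f2 f3 \in C ([set: 'I_5] :\ l) i j].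

Definition in_SC (R : realFieldType) (Tr : {set {set 'I_5 * F}}) : Prop :=
  [/\ is_triangulation (@pointA R F) Tr,
      forall S i j, validSij S i j -> forall tau, tau \in C S i j -> tau \subset Tr &
      forall S i j, validSij S i j ->
      forall k f1 f2 f3 l f,
        k \in S -> k \notin [:: i; j] ->
        Tcirc3 i j k f1 f2 f3 \in C S i j ->
        l \notin S -> inDelta f i l ->
        (X3 i j k f1 f2 f3 :\ (i, f1)) :|: [set (i, f)] \in Tr].

End Setting.

From HB Require Import structures.
From mathcomp Require Import all_boot all_order all_algebra.
From mathcomp Require Import ring lra.
From Stdlib Require Import Classical.
Set Implicit Arguments. Unset Strict Implicit. Unset Printing Implicit Defensive.
Import Order.TTheory GRing.Theory Num.Theory.
Local Open Scope ring_scope.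

(* Hypothesis (3) yields k, g in Delta_(jk) and h in Delta_(ki) with T_{ijk}^{f1 g h} in
   C_{[5]\{l},i,j}, and condition (ii) of S_C (with f2 in Delta_(il)) puts the simplex
   sigma = {(e_j,f1), (e_i,f2), (e_j,g), (e_k,g), (e_k,h), (e_i,h)} into T.  A flip on X_{ij}^{f1f2} puts s1 = X \ {(e_i,f1)} and
   s2 = X \ {(e_j,f2)} into T with equal links.
   Walk from the midpoint of (e_j,f1), (e_i,f2) slightly towards (e_j,f2) and the four
   points sigma shares with X_{ijk}^{f1gh}.  Some simplex tau of T contains the start of
   this path, hence the midpoint, hence (e_j,f1) and (e_i,f2); row and column sums of the
   coordinates force (e_j,f2) into tau as well, and then (e_i,f1) is not in tau.  Moving the
   weight of (e_j,f2) onto (e_j,f1) and (e_i,f2) gives a point with full support in sigma,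
   which therefore lies in no simplex of T missing a point of sigma.  If (e_j,f2) carries
   enough weight, that point lies in tau, so tau contains the circuit X_{ijk}^{f2gh};
   otherwise, using the square relation of X, it lies in (tau \ s1) u s2, a simplex of T
   since s1 and s2 have the same link, which then contains the circuit X_{ijk}^{f1gh}. *)

Lemma neq_rules (A : eqType) (x y : A) : x != y -> ((x == y) = false) * ((y == x) = false).
Proof. by move=> Hxy; rewrite (negbTE Hxy) eq_sym (negbTE Hxy). Qed.

(** * Triangulations of point configurations *)

Section PointConfiguration.
Variables (R : realFieldType) (T : finType) (d : nat) (pt : T -> 'rV[R]_d).

Lemma aff_indep_coord_unique (S : {set T}) (lam mu : T -> R) :
  aff_indep pt S ->
  (forall t, t \notin S -> lam t = 0) -> (forall t, t \notin S -> mu t = 0) ->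
  \sum_t lam t = \sum_t mu t -> \sum_t lam t *: pt t = \sum_t mu t *: pt t ->
  forall t, lam t = mu t.
Proof.
move=> HS Hl Hm Hs Hp t; apply/eqP; rewrite -subr_eq0; apply/eqP.
apply: (HS (fun t => lam t - mu t)) => [x Hx||].
- by rewrite Hl // Hm // subr0.
- by rewrite sumrB Hs subrr.
- under eq_bigr => x _ do rewrite scalerBl.
  by rewrite sumrB Hp subrr.
Qed.

Lemma is_face_subset (G C : {set T}) : is_face pt G C -> G \subset C.
Proof.
move=> [->|[c ->]]; first exact: sub0set.
by apply/subsetP => y; rewrite inE => /andP[].
Qed.

(* Two simplices meet in a common face, and coordinates on a simplex are unique. *)
Lemma in_conv_support (Tr : {set {set T}}) s s' (lam : T -> R) t :
  is_triangulation pt Tr -> s \in Tr -> s' \in Tr ->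
  (forall t, 0 <= lam t) -> (forall t, t \notin s -> lam t = 0) ->
  \sum_t lam t = 1 -> in_conv pt s' (\sum_t lam t *: pt t) ->
  0 < lam t -> t \in s'.
Proof.
move=> [Hind _ Hint _] Hs Hs' H0 Hz H1 Hc Ht.
have [G [HG HG' HGe]] := Hint s s' Hs Hs'.
have [|mu [_ HmuG Hmu1 Hmux]] := (proj1 (HGe _)) (conj _ Hc); first by exists lam.
have HGs := is_face_subset HG.
have Hmus t' : t' \notin s -> mu t' = 0.
  by move=> Ht'; apply: HmuG; apply: contra Ht'; apply: (subsetP HGs).
have E := aff_indep_coord_unique (Hind s Hs) Hz Hmus
  (etrans H1 (esym Hmu1)) Hmux t.
apply: (subsetP (is_face_subset HG')); apply/negPn/negP => Hn.
by move: Ht; rewrite E HmuG // ltxx.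
Qed.

Lemma in_conv_shift (S : {set T}) (lam del : T -> R) :
  (forall t, 0 <= lam t + del t) -> (forall t, t \notin S -> lam t + del t = 0) ->
  \sum_t lam t = 1 -> \sum_t del t = 0 ->
  in_conv pt S (\sum_t lam t *: pt t + \sum_t del t *: pt t).
Proof.
move=> H0 HS H1 Hd; exists (fun t => lam t + del t); split => //.
- by rewrite big_split /= H1 Hd addr0.
- by rewrite -big_split; apply: eq_bigr => t _; rewrite scalerDl.
Qed.

Definition weights (s : seq (R * T)) (t : T) : R := \sum_(p <- s) p.1 * (t == p.2)%:R.

Lemma sum_mul_indicator (f : T -> R) x : \sum_t f t * (t == x)%:R = f x.
Proof.
rewrite (bigD1 x) //= eqxx mulr1 big1 ?addr0 // => t /negbTE ->; by rewrite mulr0.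
Qed.

Lemma sum_weights_mul (s : seq (R * T)) (f : T -> R) :
  \sum_t weights s t * f t = \sum_(p <- s) p.1 * f p.2.
Proof.
under eq_bigr => t _ do rewrite /weights mulr_suml.
rewrite exchange_big /=; apply: eq_bigr => p _.
under eq_bigr => t _ do rewrite mulrAC.
by rewrite sum_mul_indicator.
Qed.

Lemma sum_weights (s : seq (R * T)) : \sum_t weights s t = \sum_(p <- s) p.1.
Proof.
have := sum_weights_mul s (fun _ => 1).
by under eq_bigr => t _ do rewrite mulr1; under [in RHS]eq_bigr => p _ do rewrite mulr1.
Qed.

Lemma sum_weights_scale (s : seq (R * T)) :
  \sum_t weights s t *: pt t = \sum_(p <- s) p.1 *: pt p.2.
Proof.
under eq_bigr => t _ do rewrite /weights scaler_suml.
rewrite exchange_big /=; apply: eq_bigr => p _.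
rewrite (bigD1 p.2) //= eqxx mulr1 big1 ?addr0 // => t /negbTE ->.
by rewrite mulr0 scale0r.
Qed.

Lemma weights_ge (s : seq (R * T)) c t : all (fun p => 0 <= p.1) s ->
  (c, t) \in s -> c <= weights s t.
Proof.
rewrite /weights; elim: s => [//|p s IH] /= /andP[Hp Hs].
have Hs0 : 0 <= \sum_(q <- s) q.1 * (t == q.2)%:R.
  rewrite big_seq; apply: sumr_ge0 => q Hq.
  by rewrite mulr_ge0 ?ler0n ?(allP Hs).
rewrite inE big_cons => /orP[/eqP <-|Hin] /=; first by rewrite eqxx mulr1 lerDl.
by rewrite -[c]add0r lerD ?mulr_ge0 ?ler0n ?IH.
Qed.

Lemma weights_ge0 (s : seq (R * T)) t : all (fun p => 0 <= p.1) s -> 0 <= weights s t.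
Proof.
move=> /allP H; rewrite /weights big_seq; apply: sumr_ge0 => p Hp.
by rewrite mulr_ge0 ?ler0n ?H.
Qed.

Lemma weights_out (s : seq (R * T)) (S : {set T}) t :
  all (fun p => p.2 \in S) s -> t \notin S -> weights s t = 0.
Proof.
move=> /allP H Ht; rewrite /weights big_seq; apply: big1 => p Hp.
case: eqP => [E|_]; last by rewrite mulr0.
by move: (H p Hp); rewrite -E (negbTE Ht).
Qed.

Lemma in_conv_support_seq (Tr : {set {set T}}) (s s' : {set T}) (l : seq (R * T)) c t :
  is_triangulation pt Tr -> s \in Tr -> s' \in Tr ->
  all (fun p => 0 <= p.1) l -> all (fun p => p.2 \in s) l -> \sum_(p <- l) p.1 = 1 ->
  in_conv pt s' (\sum_(p <- l) p.1 *: pt p.2) -> (c, t) \in l -> 0 < c -> t \in s'.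
Proof.
move=> Htr Hs Hs' H0 Hz H1 Hc Hct Hc0.
apply: (in_conv_support (lam := weights l) Htr Hs Hs').
- by move=> x; apply: weights_ge0.
- by move=> x; apply: weights_out.
- by rewrite sum_weights.
- by rewrite sum_weights_scale.
- exact: lt_le_trans Hc0 (weights_ge H0 Hct).
Qed.

Lemma aff_dep_seq (S : {set T}) (l : seq (R * T)) t :
  all (fun p => p.2 \in S) l -> \sum_(p <- l) p.1 = 0 ->
  \sum_(p <- l) p.1 *: pt p.2 = 0 -> weights l t != 0 -> ~ aff_indep pt S.
Proof.
move=> Hl H1 H2 /eqP Ht HS; apply/Ht/HS.
- by move=> x; apply: weights_out.
- by rewrite sum_weights.
- by rewrite sum_weights_scale.
Qed.

Lemma eventually_all (A : eqType) (s : seq A) (Pd : A -> R -> Prop) :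
  (forall x δ δ', 0 < δ' <= δ -> Pd x δ -> Pd x δ') ->
  (forall x, x \in s -> exists2 δ, 0 < δ & Pd x δ) ->
  exists2 δ, 0 < δ & forall x, x \in s -> Pd x δ.
Proof.
move=> Hmon; elim: s => [_|y s IH H]; first by exists 1.
have [δ1 H1 Hy] := H y (mem_head _ _).
have [δ2 H2 Hs] := IH (fun x Hx => H x (@mem_behead _ (y :: s) x Hx)).
have Hm : 0 < Num.min δ1 δ2 by rewrite lt_min H1 H2.
exists (Num.min δ1 δ2) => // x; rewrite inE => /orP[/eqP ->|Hx].
  by apply: (Hmon y δ1) Hy; rewrite Hm ge_min lexx.
by apply: (Hmon x δ2) (Hs x Hx); rewrite Hm ge_min lexx orbT.
Qed.

Definition near_zero_in (S : {set T}) (Q0 Qd : 'rV[R]_d) : Prop :=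
  forall δ, 0 < δ -> exists e, [/\ 0 < e, e < δ & in_conv pt S (Q0 + e *: Qd)].

Lemma triangulation_near_zero (Tr : {set {set T}}) (Q0 Qd : 'rV[R]_d) :
  is_triangulation pt Tr ->
  (forall e, 0 <= e <= 1 -> in_conv pt [set: T] (Q0 + e *: Qd)) ->
  exists2 tau, tau \in Tr & near_zero_in tau Q0 Qd.
Proof.
move=> [_ _ _ Hcv] Hcov; apply: NNPP => Hn.
pose avoid x δ := forall e, 0 < e -> e < δ -> ~ in_conv pt x (Q0 + e *: Qd).
have Havoid x : x \in enum Tr -> exists2 δ, 0 < δ & avoid x δ.
  rewrite mem_enum => Hx; apply: NNPP => Hn2; apply: Hn; exists x => // δ Hδ.
  apply: NNPP => Hn3; apply: Hn2; exists δ => // e He1 He2 Hc.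
  by apply: Hn3; exists e.
have Hmon x δ δ' : 0 < δ' <= δ -> avoid x δ -> avoid x δ'.
  by move=> /andP[_ H2] Hx e He1 He2; apply: Hx => //; apply: lt_le_trans H2.
have [δ Hδ Hall] := eventually_all Hmon Havoid.
pose e := Num.min δ 1 / 2.
have Hm : 0 < Num.min δ 1 by rewrite lt_min Hδ ltr01.
have He0 : 0 < e by rewrite divr_gt0.
have Hemin : e < Num.min δ 1 by rewrite /e ltr_pdivrMr // ltr_pMr ?ltr1n.
have [x Hx Hcx] : exists2 x, x \in Tr & in_conv pt x (Q0 + e *: Qd).
  apply/Hcv/Hcov; rewrite ltW //=; apply: ltW.
  by apply: lt_le_trans Hemin _; rewrite ge_min lexx orbT.
apply: (Hall x _ e He0) Hcx; first by rewrite mem_enum.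
by apply: lt_le_trans Hemin _; rewrite ge_min lexx.
Qed.

(* On a simplex the coordinates of Q0 + e Qd are affine in e; their values at
   two small parameters determine them, and they stay nonnegative at e = 0. *)
Lemma near_zero_in_conv (S : {set T}) (Q0 Qd : 'rV[R]_d) :
  aff_indep pt S -> near_zero_in S Q0 Qd -> in_conv pt S Q0.
Proof.
move=> Hind Hnear.
have [e1 [He1 _ [l1 [_ Hl1z Hl11 Hl1x]]]] := Hnear 1 ltr01.
have [e2 [He2 He2' [l2 [_ Hl2z Hl21 Hl2x]]]] := Hnear e1 He1.
have Hd : 0 < e1 - e2 by rewrite subr_gt0.
pose L e t := l2 t + (e - e2) / (e1 - e2) * (l1 t - l2 t).
have LS e : \sum_t L e t = 1.
  by rewrite big_split /= -mulr_sumr sumrB Hl11 Hl21 subrr mulr0 addr0.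
have LV e : \sum_t L e t *: pt t = Q0 + e *: Qd.
  under eq_bigr => t _ do rewrite scalerDl -scalerA scalerBl.
  rewrite big_split /= -scaler_sumr sumrB -Hl1x -Hl2x.
  rewrite opprD addrACA subrr add0r -scalerBl scalerA -addrA -scalerDl.
  by congr (_ + _ *: _); field; rewrite lt0r_neq0.
have Lz e t : t \notin S -> L e t = 0.
  by move=> Ht; rewrite /L Hl1z // Hl2z // subrr mulr0 addr0.
exists (L 0); split; [|exact: Lz|exact: LS|by rewrite LV scale0r addr0].
move=> t; rewrite leNgt; apply/negP => Hneg.
pose B := (l1 t - l2 t) / (e1 - e2).
pose δ := - L 0 t / (`|B| + 1).
have HB1 : 0 < `|B| + 1 by rewrite ltr_wpDl.
have Hδ : 0 < δ by rewrite divr_gt0 // oppr_gt0.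
have [e3 [He3 He3' [l3 [Hl30 Hl3z Hl31 Hl3x]]]] := Hnear δ Hδ.
have E3 := aff_indep_coord_unique Hind Hl3z (Lz e3)
  (etrans Hl31 (esym (LS e3))) (etrans (esym Hl3x) (esym (LV e3))) t.
have HL : L e3 t = L 0 t + e3 * B.
  by rewrite /L /B; field; rewrite lt0r_neq0.
have h1 : e3 * B <= e3 * `|B| by apply: ler_wpM2l; [apply: ltW|apply: ler_norm].
have h2 : e3 * `|B| <= δ * `|B| by rewrite ler_wpM2r ?normr_ge0 ?ltW.
have h3 : δ * (`|B| + 1) = - L 0 t by rewrite /δ mulrVK // unitfE lt0r_neq0.
have h4 := Hl30 t; rewrite E3 HL in h4; rewrite mulrDr mulr1 in h3.
lra.
Qed.

Lemma lin_val_sum (c : 'cV[R]_d) (lam : T -> R) :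
  ((\sum_t lam t *: pt t) *m c) 0 0 = \sum_t lam t * lin_val pt c t.
Proof.
rewrite mulmx_suml summxE; apply: eq_bigr => t _.
by rewrite -scalemxAl mxE.
Qed.

Section AffineHyperplane.
Variable c1 : 'cV[R]_d.
Hypothesis lin_val_c1 : forall t, lin_val pt c1 t = 1.

(* The points of an affinely independent s lie on the hyperplane c1 = 1, hence
   are linearly independent, so any values on s are taken by a linear functional. *)
Lemma aff_indep_interpolate (s : {set T}) (y : T -> R) :
  aff_indep pt s -> exists c : 'cV[R]_d, forall t, t \in s -> lin_val pt c t = y t.
Proof.
move=> Hind.
pose M := \matrix_(p < #|s|, q < d) pt (enum_val p) 0 q.
have rowM p : row p M = pt (enum_val p) by apply/rowP => q; rewrite !mxE.
have Mfree : row_free M.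
  apply: inj_row_free => v Hv.
  pose lam t := \sum_(p < #|s|) (enum_val p == t)%:R * v 0 p.
  have Hlamv : \sum_t lam t *: pt t = v *m M.
    rewrite mulmx_sum_row.
    under eq_bigr => t _ do rewrite /lam scaler_suml.
    rewrite exchange_big /=; apply: eq_bigr => p _.
    rewrite (bigD1 (enum_val p)) //= eqxx mul1r rowM big1 ?addr0 // => t /negbTE.
    by rewrite eq_sym => ->; rewrite mul0r scale0r.
  rewrite Hv in Hlamv.
  have Hlam0 t : t \notin s -> lam t = 0.
    move=> Ht; apply: big1 => p _.
    have : enum_val p \in s := enum_valP p.
    by case: eqP => [-> /(negP Ht)//|_ _]; rewrite mul0r.
  have Hsum : \sum_t lam t = 0.
    have := lin_val_sum c1 lam; rewrite Hlamv mul0mx mxE.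
    by under eq_bigr => t _ do rewrite lin_val_c1 mulr1.
  apply/rowP => p; rewrite mxE.
  have := Hind lam Hlam0 Hsum Hlamv (enum_val p).
  rewrite /lam (bigD1 p) //= eqxx mul1r big1 ?addr0 //.
  by move=> p' Hp'; rewrite (inj_eq enum_val_inj) (negbTE Hp') mul0r.
have [B HB] := row_freeP Mfree.
exists (B *m \col_(p < #|s|) y (enum_val p)) => t Ht.
rewrite -(enum_rankK_in Ht Ht); set p := enum_rank_in Ht t.
have : row p (M *m (B *m \col_p y (enum_val p))) = row p (\col_p y (enum_val p)).
  by rewrite mulmxA HB mul1mx.
by rewrite row_mul rowM /lin_val => ->; rewrite !mxE.
Qed.

(* A subset S' of a simplex is the face cut out by a functional vanishing on S'
   and equal to 1 on the rest of the simplex. *)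
Lemma triangulation_subset_closed (Tr : {set {set T}}) (s S' : {set T}) :
  is_triangulation pt Tr -> s \in Tr -> S' \subset s -> S' \in Tr.
Proof.
move=> [Hind Hface _ _] Hs HS'; apply: (Hface s) => //.
have [->|[t0 Ht0]] := set_0Vmem S'; [by left | right].
have [c Hval] := aff_indep_interpolate (fun t => if t \in S' then 0 else 1) (Hind s Hs).
exists c; have Ht0s := subsetP HS' t0 Ht0.
apply/setP => t; rewrite !inE; apply/idP/idP.
  move=> Ht; have Hts : t \in s := subsetP HS' t Ht.
  rewrite Hts /=; apply/forallP => z; apply/implyP => Hz.
  by rewrite Hval // Hval // Ht; case: (z \in S').
case/andP => Hts /forallP /(_ t0) /implyP /(_ Ht0s).
rewrite Hval // Hval // Ht0.
by case: (t \in S') => //; rewrite ler10.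
Qed.

Lemma link_swap (Tr : {set {set T}}) (s1 s2 tau : {set T}) :
  is_triangulation pt Tr -> tau \in Tr -> s1 \subset tau ->
  link Tr s1 = link Tr s2 -> s2 :|: (tau :\: s1) \in Tr.
Proof.
move=> Htr Htau Hs1 Hlk.
have Hrest : tau :\: s1 \in link Tr s1.
  rewrite /link inE (triangulation_subset_closed Htr Htau (subsetDl _ _)) /=.
  have -> : s1 :|: tau :\: s1 = tau.
    apply/setP => x; rewrite !inE.
    by case: (boolP (x \in s1)) => //= /(subsetP Hs1).
  rewrite Htau andbT disjoints_subset.
  by apply/subsetP => x Hx; rewrite !inE Hx.
by move: Hrest; rewrite Hlk inE => /and3P[].
Qed.

End AffineHyperplane.

End PointConfiguration.

(** * The configuration Delta^4 x Delta^(n-1) *)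

Section ProductOfSimplices.
Variables (R : realFieldType) (F : finType).
Local Notation T := ('I_5 * F)%type.
Local Notation P := (@pointA R F).

Lemma pointA_row (p : T) r : P p 0 (lshift #|F| r) = (r == p.1)%:R.
Proof. by rewrite /pointA row_mxEl mxE. Qed.

Lemma pointA_col (p : T) g : P p 0 (rshift 5 (enum_rank g)) = (g == p.2)%:R.
Proof. by rewrite /pointA row_mxEr mxE (inj_eq enum_rank_inj). Qed.

Lemma lin_val_pointA_row_sum (t : T) : lin_val P (col_mx (const_mx 1) 0) t = 1.
Proof.
rewrite /lin_val /pointA mul_row_col mulmx0 addr0 mxE.
under eq_bigr => r _ do rewrite !mxE mulr1.
by rewrite (bigD1 t.1) //= eqxx big1 ?addr0 // => r /negbTE ->.
Qed.

Lemma pointA_square r r' g g' : P (r, g) + P (r', g') = P (r, g') + P (r', g).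
Proof. by rewrite /pointA !add_row_mx [X in row_mx _ X]addrC. Qed.

Lemma pointA_hexagon r1 r2 r3 g1 g2 g3 :
  P (r1, g1) + P (r2, g2) + P (r3, g3) = P (r2, g1) + P (r3, g2) + P (r1, g3).
Proof.
by rewrite /pointA !add_row_mx; congr row_mx; rewrite -addrA addrC.
Qed.

Definition rowsum (lam : T -> R) r := \sum_t lam t * (t.1 == r)%:R.
Definition colsum (lam : T -> R) g := \sum_t lam t * (t.2 == g)%:R.

Lemma rowsum_eq (lam mu : T -> R) r :
  \sum_t lam t *: P t = \sum_t mu t *: P t -> rowsum lam r = rowsum mu r.
Proof.
move/(congr1 (fun x : 'rV[R]_(5 + #|F|) => x 0 (lshift #|F| r))).
rewrite !summxE /rowsum.
under eq_bigr => t _ do rewrite mxE pointA_row eq_sym.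
by under [in X in _ = X -> _]eq_bigr => t _ do rewrite mxE pointA_row eq_sym.
Qed.

Lemma colsum_eq (lam mu : T -> R) g :
  \sum_t lam t *: P t = \sum_t mu t *: P t -> colsum lam g = colsum mu g.
Proof.
move/(congr1 (fun x : 'rV[R]_(5 + #|F|) => x 0 (rshift 5 (enum_rank g)))).
rewrite !summxE /colsum.
under eq_bigr => t _ do rewrite mxE pointA_col eq_sym.
by under [in X in _ = X -> _]eq_bigr => t _ do rewrite mxE pointA_col eq_sym.
Qed.

Lemma le_rowsum (lam : T -> R) r g : (forall t, 0 <= lam t) -> lam (r, g) <= rowsum lam r.
Proof.
move=> H; rewrite /rowsum -(sum_mul_indicator lam (r, g)); apply: ler_sum => -[r' g'] _.
case: eqP => [[-> ->]|_]; first by rewrite /= eqxx.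
by rewrite mulr0 mulr_ge0.
Qed.

Lemma colsum_le (lam : T -> R) i j g : i != j -> (forall t, 0 <= lam t) ->
  colsum lam g <= lam (i, g) + lam (j, g) + (\sum_t lam t - rowsum lam i - rowsum lam j).
Proof.
move=> Hij H; rewrite /colsum /rowsum.
rewrite -(sum_mul_indicator lam (i, g)) -(sum_mul_indicator lam (j, g)).
rewrite -!sumrB -!big_split /=; apply: ler_sum => -[r h] _ /=; rewrite !xpair_eqE.
have := H (r, h); case: (r =P i) => [->|_]; case: (r =P j) => [Erj|_];
  case: (h =P g) => [->|_]; rewrite /= ?eqxx ?(negbTE Hij) //=;
  by [rewrite Erj eqxx in Hij | lra].
Qed.

Lemma aff_indep_no_square (S : {set T}) r r' g g' : r != r' -> g != g' ->
  aff_indep P S -> (r, g) \in S -> (r', g') \in S -> (r', g) \in S -> (r, g') \in S -> False.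
Proof.
move=> /neq_rules Hr /neq_rules Hg HS H1 H2 H3 H4.
pose l := [:: (1 : R, (r, g)); (1, (r', g')); (-1, (r', g)); (-1, (r, g'))].
apply: (@aff_dep_seq _ _ _ P S l (r, g)) HS.
- by rewrite /= H1 H2 H3 H4.
- by rewrite /l !big_cons big_nil /=; ring.
- apply/rowP => q; move/rowP/(_ q): (pointA_square r r' g g').
  by rewrite /l !big_cons big_nil /= !mxE; lra.
- rewrite /weights !big_cons big_nil /= !xpair_eqE ?Hr ?Hg ?eqxx /=.
  by rewrite mulr1 !mulr0 !addr0 oner_neq0.
Qed.

Lemma aff_indep_no_hexagon (S : {set T}) r1 r2 r3 g1 g2 g3 :
  uniq [:: r1; r2; r3] -> uniq [:: g1; g2; g3] -> aff_indep P S ->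
  all (mem S) [:: (r1, g1); (r2, g2); (r3, g3); (r2, g1); (r3, g2); (r1, g3)] -> False.
Proof.
rewrite /= !inE !negb_or !andbT => /andP[/andP[r12 r13] r23] /andP[/andP[g12 g13] g23].
move=> HS Hall.
pose l := [:: (1 : R, (r1, g1)); (1, (r2, g2)); (1, (r3, g3));
              (-1, (r2, g1)); (-1, (r3, g2)); (-1, (r1, g3))].
apply: (@aff_dep_seq _ _ _ P S l (r1, g1)) HS.
- by rewrite /= andbT.
- by rewrite /l !big_cons big_nil /=; ring.
- apply/rowP => q; move/rowP/(_ q): (pointA_hexagon r1 r2 r3 g1 g2 g3).
  by rewrite /l !big_cons big_nil /= !mxE; lra.
- rewrite /weights !big_cons big_nil /= !xpair_eqE.
  rewrite ?(neq_rules r12) ?(neq_rules r13) ?(neq_rules g13) ?eqxx /=.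
  by rewrite mulr1 !mulr0 !addr0 oner_neq0.
Qed.

End ProductOfSimplices.

(** * Maximal cells of T_X^+ *)

Section CircuitCells.
Variables (T : finType) (a b c d : T).

Lemma mem_Tplus (s : {set T}) : s \in Tplus [set a; b] [set c; d] =
  (s \subset [set a; b; c; d]) && ~~ ([set a; b] \subset s).
Proof. by rewrite inE setUA. Qed.

Lemma Tplus_maximal (s : {set T}) e :
  e \in [set a; b] -> s \in Tplus [set a; b] [set c; d] ->
  [set a; b; c; d] :\ e \subset s -> is_maximal_in (Tplus [set a; b] [set c; d]) s.
Proof.
move=> He Hs Hsub; split => // s'; rewrite mem_Tplus => /andP[HsX' HsN'] Hss'.
apply/eqP; rewrite eqEsubset Hss' andbT; apply/subsetP => x Hx.
have [Exe|Hxe] := eqVneq x e; last by apply: (subsetP Hsub); rewrite in_setD1 Hxe (subsetP HsX').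
case/negP: HsN'; apply/subsetP => y Hy; have [->|Hye] := eqVneq y e; first by rewrite -Exe.
by apply/(subsetP Hss')/(subsetP Hsub); rewrite in_setD1 Hye; move: Hy; rewrite !inE => ->.
Qed.

Hypothesis Habcd : uniq [:: a; b; c; d].

Lemma Tplus_maximal_cells :
  is_maximal_in (Tplus [set a; b] [set c; d]) [set c; d; b] /\
  is_maximal_in (Tplus [set a; b] [set c; d]) [set a; c; d].
Proof.
move: Habcd; rewrite /= !inE !negb_or.
move=> /and4P[/and3P[ab ac ad] /andP[bc bd] cd _].
have NE := (neq_rules ab, neq_rules ac, neq_rules ad, neq_rules bc, neq_rules bd,
  neq_rules cd).
split; [apply: (@Tplus_maximal _ a)|apply: (@Tplus_maximal _ b)];
  rewrite ?mem_Tplus ?subUset ?sub1set ?inE ?NE ?eqxx ?orbT //= ?NE //;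
  apply/subsetP => x; rewrite !inE => /andP[/negbTE ->] /=;
  by case: (x == a); case: (x == b); case: (x == c); case: (x == d).
Qed.

End CircuitCells.

(** * No flip next to the simplex sigma *)

Section FlipBesideHexagon.
Variables (R : realFieldType) (F : finType) (Tr : {set {set 'I_5 * F}}).
Local Notation T := ('I_5 * F)%type.
Local Notation P := (@pointA R F).
Hypothesis Htri : is_triangulation P Tr.
Variables (i j k : 'I_5) (f1 f2 g h : F).
Hypotheses (Hij : i != j) (Hik : i != k) (Hjk : j != k).
Hypotheses (Hf12 : f1 != f2) (Hf1g : f1 != g) (Hf1h : f1 != h)
  (Hf2g : f2 != g) (Hf2h : f2 != h) (Hgh : g != h).

Let NE := (neq_rules Hij, neq_rules Hik, neq_rules Hjk, neq_rules Hf12, neq_rules Hf1g,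
  neq_rules Hf1h, neq_rules Hf2g, neq_rules Hf2h, neq_rules Hgh).

Definition segment (e : R) : seq (R * T) :=
  [:: ((1 - e) / 2, (j, f1)); ((1 - e) / 2, (i, f2)); (e / 2, (j, f2));
      (e / 8, (j, g)); (e / 8, (k, g)); (e / 8, (k, h)); (e / 8, (i, h))].

Definition shifted (e : R) : seq (R * T) :=
  [:: ((1 - e) / 2 + e / 4, (j, f1)); ((1 - e) / 2 + e / 4, (i, f2));
      (e / 8, (j, g)); (e / 8, (k, g)); (e / 8, (k, h)); (e / 8, (i, h))].

Local Notation point l := (\sum_(p <- l) p.1 *: P p.2).

Lemma segment_affine (e : R) :
  point (segment e) = point (segment 0) + e *: (point (segment 1) - point (segment 0)).
Proof.
by apply/rowP => q; rewrite !big_cons big_nil !mxE /=; ring.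
Qed.

Lemma segment_in_conv (e : R) : 0 <= e <= 1 -> in_conv P [set: T] (point (segment e)).
Proof.
move=> /andP[He0 He1]; exists (weights (segment e)); split.
- move=> t; apply: weights_ge0; rewrite /= !divr_ge0 //; lra.
- by move=> t; rewrite inE.
- by rewrite sum_weights !big_cons big_nil /=; field.
- by rewrite sum_weights_scale.
Qed.

Hypothesis Hs1 : [set (j, f1); (i, f2); (j, f2)] \in Tr.

Lemma segment_start_simplex : exists2 tau, tau \in Tr &
  [/\ (j, f1) \in tau, (i, f2) \in tau &
      exists e, [/\ 0 < e, e < 1 / 4 & in_conv P tau (point (segment e))]].
Proof.
have [tau Htau Hnear] := triangulation_near_zero Htri
  (fun e He => eq_ind _ (in_conv P _) (segment_in_conv He) _ (segment_affine e)).
exists tau => //.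
have [e [He0 He1 He]] := Hnear (1 / 4) ltac:(lra); rewrite -segment_affine in He.
pose l := [:: (1 / 2 : R, (j, f1)); (1 / 2, (i, f2))].
have Hl : in_conv P tau (point l).
  have -> : point l = point (segment 0).
    by apply/rowP => q; rewrite !big_cons big_nil !mxE /=; ring.
  by apply: near_zero_in_conv Hnear; have [Hind _ _ _] := Htri; apply: Hind.
have Hsupp c t : (c, t) \in l -> 0 < c -> t \in tau.
  apply: (in_conv_support_seq Htri Hs1 Htau _ _ _ Hl).
  - by rewrite /= andbT; lra.
  - by rewrite /= !inE !eqxx !orbT.
  - by rewrite !big_cons big_nil /=; field.
split; [apply: (Hsupp (1 / 2)) | apply: (Hsupp (1 / 2)) | by exists e];
  rewrite ?inE ?eqxx ?orbT //; lra.
Qed.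

Lemma segment_coords (e : R) (lam : T -> R) :
  (forall t, 0 <= lam t) -> \sum_t lam t = 1 -> point (segment e) = \sum_t lam t *: P t ->
  [/\ e / 8 <= lam (j, f2), (1 - e) / 2 - e / 4 <= lam (i, f1) + lam (j, f1)
     & 1 / 2 - e / 4 <= lam (i, f2) + lam (j, f2)].
Proof.
move=> Hl0 Hl1 Hlx.
have Heq : \sum_t lam t *: P t = \sum_t weights (segment e) t *: P t.
  by rewrite sum_weights_scale Hlx.
have Hri : rowsum lam i = (1 - e) / 2 + e / 8.
  by rewrite (rowsum_eq _ Heq) /rowsum sum_weights_mul !big_cons big_nil /= ?NE ?eqxx /=; ring.
have Hrj : rowsum lam j = (1 - e) / 2 + e / 2 + e / 8.
  by rewrite (rowsum_eq _ Heq) /rowsum sum_weights_mul !big_cons big_nil /= ?NE ?eqxx /=; ring.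
have Hc1 : colsum lam f1 = (1 - e) / 2.
  by rewrite (colsum_eq _ Heq) /colsum sum_weights_mul !big_cons big_nil /= ?NE ?eqxx /=; ring.
have Hc2 : colsum lam f2 = 1 / 2.
  by rewrite (colsum_eq _ Heq) /colsum sum_weights_mul !big_cons big_nil /= ?NE ?eqxx /=; ring.
have := colsum_le f1 Hij Hl0; have := colsum_le f2 Hij Hl0; have := le_rowsum i f2 Hl0.
rewrite Hl1 Hri Hrj Hc1 Hc2 => *; split; lra.
Qed.

Lemma shifted_point (e : R) : point (shifted e) =
  point (segment e) + (e / 4 *: (P (j, f1) + P (i, f2)) - e / 2 *: P (j, f2)).
Proof. by apply/rowP => q; rewrite !big_cons big_nil !mxE /=; ring. Qed.

Variable sigma : {set T}.
Hypotheses (Hsigma : sigma \in Tr)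
  (Hhex : all (mem sigma) [:: (j, f1); (i, f2); (j, g); (k, g); (k, h); (i, h)]).

Lemma shifted_support (e : R) (S : {set T}) : 0 < e < 1 -> S \in Tr ->
  in_conv P S (point (shifted e)) -> all (mem S) [:: (j, f1); (j, g); (k, g); (k, h); (i, h)].
Proof.
move=> /andP[He0 He1] HS HX.
have Hsupp c t : (c, t) \in shifted e -> 0 < c -> t \in S.
  apply: (in_conv_support_seq Htri Hsigma HS _ _ _ HX).
  - rewrite /= andbT !divr_ge0 //; lra.
  - exact: Hhex.
  - by rewrite !big_cons big_nil /=; field.
have He8 : 0 < e / 8 by rewrite divr_gt0.
rewrite /= andbT (Hsupp ((1 - e) / 2 + e / 4)) ?(Hsupp (e / 8)) ?inE ?eqxx ?orbT //; lra.
Qed.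

Lemma heavy_corner_contra (e : R) (tau : {set T}) (lam : T -> R) :
  0 < e < 1 -> tau \in Tr -> (j, f1) \in tau -> (i, f2) \in tau -> (j, f2) \in tau ->
  (forall t, 0 <= lam t) -> (forall t, t \notin tau -> lam t = 0) ->
  \sum_t lam t = 1 -> point (segment e) = \sum_t lam t *: P t ->
  e / 2 <= lam (j, f2) -> False.
Proof.
move=> He Htau Htau1 Htau2 Htau3 Hl0 Hlz Hl1 Hlx Hheavy.
pose del := weights [:: (- (e / 2), (j, f2)); (e / 4, (j, f1)); (e / 4, (i, f2))].
have HX : in_conv P tau (point (shifted e)).
  rewrite shifted_point Hlx.
  have -> : e / 4 *: (P (j, f1) + P (i, f2)) - e / 2 *: P (j, f2) = \sum_t del t *: P t.
    by rewrite sum_weights_scale; apply/rowP => q; rewrite !big_cons big_nil !mxE /=; ring.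
  apply: in_conv_shift => //.
  - move=> t; rewrite /del /weights !big_cons big_nil /=.
    have := Hl0 t; have [->|_] := eqVneq t (j, f2).
      by rewrite !xpair_eqE ?NE ?eqxx /=; lra.
    case: (t == (j, f1)); case: (t == (i, f2)) => /=; have /andP[He0 _] := He; lra.
  - move=> t Ht; rewrite Hlz // /del (weights_out (S := tau)) ?addr0 //.
    by rewrite /= Htau1 Htau2 Htau3.
  - by rewrite sum_weights !big_cons big_nil /=; field.
have [Hind _ _ _] := Htri.
move: (shifted_support He Htau HX) => /= /and5P[_ Hjg Hkg Hkh /andP[Hih _]].
by apply: (@aff_indep_no_hexagon _ _ tau i j k f2 g h) (Hind _ Htau) _;
  rewrite /= ?Htau2 ?Htau3 ?Hjg ?Hkg ?Hkh ?Hih ?inE ?NE.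
Qed.

Lemma square_shift (e lb : R) :
  e / 4 *: (P (j, f1) + P (i, f2)) - e / 2 *: P (j, f2) =
  point [:: (- lb, (j, f2)); (e / 2 - lb, (i, f1)); (lb - e / 4, (j, f1)); (lb - e / 4, (i, f2))].
Proof.
rewrite !big_cons big_nil /=.
have -> : P (i, f1) = P (i, f2) + P (j, f1) - P (j, f2) by rewrite -pointA_square addrK.
move: (P (j, f1)) (P (i, f2)) (P (j, f2)) => x y z.
by apply/rowP => q; rewrite !mxE; field.
Qed.

Lemma shifted_in_conv_swap (e : R) (tau : {set T}) (lam : T -> R) :
  0 < e < 1 / 4 -> (i, f1) \notin tau ->
  (forall t, 0 <= lam t) -> (forall t, t \notin tau -> lam t = 0) ->
  \sum_t lam t = 1 -> point (segment e) = \sum_t lam t *: P t -> lam (j, f2) < e / 2 ->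
  in_conv P ([set (i, f1); (j, f1); (i, f2)] :|: tau :\: [set (j, f1); (i, f2); (j, f2)])
    (point (shifted e)).
Proof.
move=> /andP[He0 He1] Hnot Hl0 Hlz Hl1 Hlx Hlight.
have [_ Hb1 Hb2] := segment_coords Hl0 Hl1 Hlx.
rewrite (Hlz _ Hnot) add0r in Hb1.
have Hlb0 := Hl0 (j, f2).
move Elb : (lam (j, f2)) => lb in Hb2 Hlight Hlb0.
rewrite shifted_point Hlx (square_shift e lb) -sum_weights_scale.
set del := weights _; apply: in_conv_shift => //.
- move=> t; rewrite /del /weights !big_cons big_nil /=.
  have := Hl0 t; have [->|Ht1] := eqVneq t (i, f1).
    by rewrite (Hlz _ Hnot) !xpair_eqE ?NE ?eqxx /=; lra.
  have [->|Ht2] := eqVneq t (j, f2); first by rewrite Elb !xpair_eqE ?NE ?eqxx /=; lra.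
  have [->|Ht3] := eqVneq t (j, f1); first by rewrite !xpair_eqE ?NE ?eqxx /=; lra.
  have [->|Ht4] := eqVneq t (i, f2); first by rewrite ?xpair_eqE ?NE ?eqxx /=; lra.
  by rewrite /= !mulr0 !addr0.
- move=> t Ht; have [->|Ht2] := eqVneq t (j, f2).
    by rewrite Elb /del /weights !big_cons big_nil /= ?xpair_eqE ?NE ?eqxx /=; ring.
  have [Ht1 Ht3 Ht4 Htt] :
      [/\ t != (i, f1), t != (j, f1), t != (i, f2) & t \notin tau].
    move: Ht; rewrite !inE (negbTE Ht2).
    by case: (t == (i, f1)); case: (t == (j, f1)); case: (t == (i, f2)); case: (t \in tau).
  rewrite Hlz // /del (weights_out (S := [set (i, f1); (j, f1); (i, f2); (j, f2)])).
  + by rewrite addr0.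
  + by rewrite /= !inE !eqxx ?orbT.
  + by rewrite !inE (negbTE Ht1) (negbTE Ht2) (negbTE Ht3) (negbTE Ht4).
- by rewrite sum_weights !big_cons big_nil /=; field.
Qed.

Hypothesis Hlink :
  link Tr [set (j, f1); (i, f2); (j, f2)] = link Tr [set (i, f1); (j, f1); (i, f2)].

Lemma light_corner_contra (e : R) (tau : {set T}) (lam : T -> R) :
  0 < e < 1 / 4 -> tau \in Tr -> (j, f1) \in tau -> (i, f2) \in tau -> (j, f2) \in tau ->
  (i, f1) \notin tau ->
  (forall t, 0 <= lam t) -> (forall t, t \notin tau -> lam t = 0) ->
  \sum_t lam t = 1 -> point (segment e) = \sum_t lam t *: P t ->
  lam (j, f2) < e / 2 -> False.
Proof.
move=> He Htau Htau1 Htau2 Htau3 Hnot Hl0 Hlz Hl1 Hlx Hlight.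
have Hs1tau : [set (j, f1); (i, f2); (j, f2)] \subset tau.
  by rewrite !subUset !sub1set Htau1 Htau2 Htau3.
have Htau' := link_swap (@lin_val_pointA_row_sum R F) Htri Htau Hs1tau Hlink.
have HX := shifted_in_conv_swap He Hnot Hl0 Hlz Hl1 Hlx Hlight.
set tau' := _ :|: _ in Htau' HX.
have [Hind _ _ _] := Htri.
have He1 : 0 < e < 1 by move: He => /andP[He0 He1]; apply/andP; split; lra.
move: (shifted_support He1 Htau' HX) => /= /and5P[Hjf1 Hjg Hkg Hkh /andP[Hih _]].
have Hif1 : (i, f1) \in tau' by rewrite !inE eqxx.
by apply: (@aff_indep_no_hexagon _ _ tau' i j k f1 g h) (Hind _ Htau') _;
  rewrite /= ?Hif1 ?Hjf1 ?Hjg ?Hkg ?Hkh ?Hih ?inE ?NE.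
Qed.

Lemma no_flip_beside_hexagon : False.
Proof.
have [Hind _ _ _] := Htri.
have [tau Htau [Htau1 Htau2 [e [He0 He1 [lam [Hl0 Hlz Hl1 Hlx]]]]]] := segment_start_simplex.
have [Hb _ _] := segment_coords Hl0 Hl1 Hlx.
have Htau3 : (j, f2) \in tau.
  by apply: contraT => /Hlz Hn; rewrite Hn in Hb; lra.
have Hnot : (i, f1) \notin tau.
  by apply/negP => Htau0; apply: (aff_indep_no_square Hij Hf12 (Hind _ Htau)).
have [Hheavy|Hlight] := lerP (e / 2) (lam (j, f2)).
- by apply: (heavy_corner_contra _ Htau Htau1 Htau2 Htau3 Hl0 Hlz Hl1 Hlx Hheavy); lra.
- by apply: (light_corner_contra _ Htau Htau1 Htau2 Htau3 Hnot Hl0 Hlz Hl1 Hlx Hlight); lra.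
Qed.

End FlipBesideHexagon.

Lemma inDelta_neq (F : finType) (lab : F -> {set 'I_5}) f f' x y x' y' z :
  inDelta lab f x y -> inDelta lab f' x' y' -> z \in [set x; y] -> z \notin [set x'; y'] ->
  f != f'.
Proof. by move=> /eqP Hf /eqP Hf' Hz; apply: contraNneq => Eff'; rewrite -Hf' -Eff' Hf. Qed.

Lemma inDelta_uniq (F : finType) (lab : F -> {set 'I_5}) (i j k l : 'I_5) f1 f2 g h :
  uniq [:: i; j; l] -> k \notin [:: i; j; l] ->
  inDelta lab f1 i j -> inDelta lab f2 i l -> inDelta lab g j k -> inDelta lab h k i ->
  uniq [:: f1; f2; g; h].
Proof.
rewrite /= !inE !negb_or => /andP[/andP[Hij Hil] /andP[Hjl _]] /andP[Hki /andP[Hkj Hkl]].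
move=> Hf1 Hf2 Hg Hh.
have NE := (neq_rules Hij, neq_rules Hil, neq_rules Hjl, neq_rules Hki, neq_rules Hkj,
  neq_rules Hkl).
apply/and4P; split=> //; [apply/and3P; split|apply/andP; split|];
  [ apply: (inDelta_neq (z := j) Hf1 Hf2) | apply: (inDelta_neq (z := i) Hf1 Hg)
  | apply: (inDelta_neq (z := j) Hf1 Hh) | apply: (inDelta_neq (z := i) Hf2 Hg)
  | apply: (inDelta_neq (z := l) Hf2 Hh) | apply: (inDelta_neq (z := j) Hg Hh) ];
  by rewrite !inE ?NE ?eqxx ?orbT.
Qed.

Local Close Scope ring_scope.

Theorem proposition5p6 (R : realFieldType) (F : finType)
    (lab : F -> {set 'I_5}) (Hlab : forall f, #|lab f| = 2)
    (C : {set 'I_5} -> 'I_5 -> 'I_5 -> {set {set {set 'I_5 * F}}})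
    (HC0 : C_members lab C) (HC1 : C_hyp1 lab C) (HC2 : C_hyp2 lab C)
    (HC3 : C_hyp3 lab C)
    (Tr : {set {set 'I_5 * F}}) (HT : in_SC lab C R Tr)
    (i j l : 'I_5) (Hijl : uniq [:: i; j; l])
    (f1 f2 : F) (Hf1 : inDelta lab f1 i j) (Hf2 : inDelta lab f2 i l) :
  ~ has_flip Tr [set (i, f1); (j, f2)] [set (j, f1); (i, f2)].
Proof.
move=> [Hplus Hlink]; have [Htri _ Hreplace] := HT.
have [k [g [h [Hk Hg Hh HkC]]]] := HC3 i j l Hijl f1 Hf1.
have := inDelta_uniq Hijl Hk Hf1 Hf2 Hg Hh; rewrite /= !inE !negb_or.
move=> /and4P[/and3P[Hf12 Hf1g Hf1h] /andP[Hf2g Hf2h] Hgh _].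
move: Hijl Hk; rewrite /= !inE !negb_or => /andP[/andP[Hij Hil] /andP[Hjl _]].
move=> /andP[Hki /andP[Hkj Hkl]]; rewrite eq_sym in Hki; rewrite eq_sym in Hkj.
have NE := (neq_rules Hij, neq_rules Hil, neq_rules Hjl, neq_rules Hki, neq_rules Hkj,
  neq_rules Hkl, neq_rules Hf12, neq_rules Hf1g, neq_rules Hf1h, neq_rules Hf2g,
  neq_rules Hf2h, neq_rules Hgh).
have HS : validSij ([set: 'I_5] :\ l) i j.
  rewrite /validSij !inE ?NE /= andbT.
  by have := cardsD1 l [set: 'I_5]; rewrite cardsT card_ord inE add1n => -[<-].
have [Hm1 Hm2] := @Tplus_maximal_cells _ (i, f1) (j, f2) (j, f1) (i, f2)
  ltac:(by rewrite /= !inE !xpair_eqE ?NE ?eqxx).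
apply: (no_flip_beside_hexagon Htri Hij Hki Hkj Hf12 Hf1g Hf1h Hf2g Hf2h Hgh
  (subsetP Hplus _ Hm1.1) (Hreplace _ i j HS k f1 g h l f2 _ _ HkC _ Hf2) _
  (Hlink _ _ Hm1 Hm2)); rewrite ?inE ?NE ?eqxx //.
by rewrite /X3 /Xplus3 /Xminus3 /= !inE !xpair_eqE ?NE ?eqxx ?orbT.
Qed.
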